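(* Let $G=(V,E)$ be any finite connected undirected unweighted graph with $n$ vertices. For the $\lambda$-mixed Moran process with $\lambda=1/2$ and $r=1$, the fixation probability from any initial mutant set $S_0\subseteq V$ is exactly $|S_0|/n$.
   Context: The $\lambda$-mixed Moran process on a connected graph $G=(V,E)$ with $n=|V|\ge 2$: each vertex hosts a resident (fitness $1$) or mutant (fitness $r>0$); the state is the mutant set $S_t\subseteq V$. Each step, independently: with probability $\lambda$ a Birth-death step (a vertex $u$ chosen with probability proportional to fitness among all vertices; a uniformly random neighbor of $u$ takes $u$'s type); with probability $1-\lambda$ a death-Birth step (a uniformly random vertex $v$ dies; a neighbor $u$ of $v$ chosen with probability proportional to fitness among the neighbors of $v$; $v$ takes $u$'s type). The fixation probability from $S_0$ is the probability that the process reaches $S_t=V$. *)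

From HB Require Import structures.
From mathcomp Require Import all_boot all_order all_algebra.
From mathcomp Require Import all_classical all_reals topology normedtype sequences.
Set Implicit Arguments. Unset Strict Implicit. Unset Printing Implicit Defensive.
Import Order.TTheory GRing.Theory Num.Theory.
Local Open Scope ring_scope.

(* A graph is a rel e on a finType T (symmetric, irreflexive, connected are
   hypotheses of the theorem).  States are mutant sets S : {set T}. *)
Section Moran.
Variables (R : realType) (T : finType) (e : rel T).

Definition nbrs (u : T) : {set T} := [set v | e u v].

Definition fit (r : R) (S : {set T}) (u : T) : R := if u \in S then r else 1.

Definition copy_type (S : {set T}) (u v : T) : {set T} :=
  if u \in S then v |: S else S :\ v.

Definition bd_step (r : R) (S S' : {set T}) : R :=
  \sum_(u : T) \sum_(v in nbrs u)
     (fit r S u / \sum_(w : T) fit r S w) * (#|nbrs u|%:R)^-1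
     * (copy_type S u v == S')%:R.

Definition db_step (r : R) (S S' : {set T}) : R :=
  \sum_(v : T) \sum_(u in nbrs v)
     (#|T|%:R)^-1 * (fit r S u / \sum_(w in nbrs v) fit r S w)
     * (copy_type S u v == S')%:R.

Definition mixed_step (lam r : R) (S S' : {set T}) : R :=
  lam * bd_step r S S' + (1 - lam) * db_step r S S'.

Fixpoint reach_within (lam r : R) (t : nat) (S : {set T}) : R :=
  if S == [set: T] then 1 else
  match t with
  | 0 => 0
  | t'.+1 => \sum_(S' : {set T}) mixed_step lam r S S' * reach_within lam r t' S'
  end.

End Moran.

(* With r = 1 both update rules pick a uniform vertex u and a uniform
   neighbour v of u: Birth-death lets v copy u, death-Birth lets u copy v.
   For lambda = 1/2 the two directions are equally likely, so the expected
   change of the number of mutants vanishes and S |-> |S|/n is harmonic for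
   the chain, with value 1 at V and 0 at the empty set.  By connectivity a
   nonempty mutant set can grow along a boundary edge at every step with
   probability at least c = 1/(2n^2), so fixation within n steps has
   probability at least c^n from every state carrying a mutant.  Hence the
   gap between |S|/n and the probability of fixing within t steps decays like
   (1 - c^n)^(t/n), and the finite-horizon probabilities converge to |S|/n. *)

From mathcomp Require Import all_boot all_order all_algebra.
From mathcomp Require Import all_classical all_reals topology normedtype sequences.
From mathcomp Require Import zify.
Import Order.TTheory GRing.Theory Num.Theory numFieldNormedType.Exports.

Set Implicit Arguments.
Unset Strict Implicit.
Unset Printing Implicit Defensive.

Local Open Scope ring_scope.

Section HitWithin.
Variables (R : realDomainType) (X : finType) (P : X -> X -> R) (top : X).

Fixpoint hit_within (t : nat) (x : X) : R :=
  if x == top then 1 else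
  if t is t'.+1 then \sum_y P x y * hit_within t' y else 0.

Lemma hit_within_top t : hit_within t top = 1.
Proof. by case: t => [|t] /=; rewrite eqxx. Qed.

Lemma hit_withinS t x :
  x != top -> hit_within t.+1 x = \sum_y P x y * hit_within t y.
Proof. by move=> /negbTE /= ->. Qed.

Hypotheses (P_ge0 : forall x y, 0 <= P x y)
  (P_sum1 : forall x, \sum_y P x y = 1).

Lemma hit_within_ge0 t x : 0 <= hit_within t x.
Proof.
elim: t x => [|t IH] x /=; case: ifP => _ //.
by apply: sumr_ge0 => y _; rewrite mulr_ge0.
Qed.

Lemma hit_within_ge_expr (A : pred X) (phi : X -> nat) (c : R) :
  0 <= c <= 1 ->
  (forall x, x \in A -> x != top ->
     exists2 y, (y \in A) && (phi y < phi x)%N & c <= P x y) ->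
  forall k x, x \in A -> (phi x <= k)%N -> c ^+ k <= hit_within k x.
Proof.
move=> /andP[c_ge0 c_le1] descent k; elim: k => [|k IH] x xA phi_x;
  have [-> | x_top] := eqVneq x top; rewrite ?hit_within_top ?exprn_ile1 //.
  by have [y /andP[_]] := descent x xA x_top; rewrite ltnNge (leq_trans phi_x).
have [y /andP[yA phi_y] c_le] := descent x xA x_top.
rewrite hit_withinS // (bigD1 y) //= exprS.
apply: le_trans (_ : P x y * hit_within k y <= _).
  by rewrite ler_pM ?exprn_ge0 // IH // -ltnS (leq_trans phi_y).
by rewrite lerDl sumr_ge0 // => z _; rewrite mulr_ge0 ?hit_within_ge0.
Qed.

Variable h : X -> R.
Hypotheses (h_top : h top = 1) (h_ge0 : forall x, 0 <= h x)
  (h_le1 : forall x, h x <= 1)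
  (h_harmonic : forall x, x != top -> \sum_y P x y * h y = h x).

Lemma hit_within_le t x : hit_within t x <= h x.
Proof.
elim: t x => [|t IH] x; have [-> | x_top] := eqVneq x top;
  rewrite ?hit_within_top ?h_top //.
  by rewrite /= (negbTE x_top).
rewrite hit_withinS // -h_harmonic //.
by apply: ler_sum => y _; rewrite ler_wpM2l.
Qed.

(* Markov property: the first k steps either hit top or lead to a state whose
   deficit after t more steps is at most M. *)
Lemma sub_hit_within_addn t k (M : R) :
  (forall x, h x - hit_within t x <= M) ->
  forall x, h x - hit_within (t + k) x <= M * (1 - hit_within k x).
Proof.
move=> le_M; elim: k => [|k IH] x; have [-> | x_top] := eqVneq x top;
  rewrite ?hit_within_top ?h_top ?subrr ?mulr0 //.
  by rewrite addn0 /= (negbTE x_top) subr0 mulr1.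
have -> : M * (1 - hit_within k.+1 x) =
    \sum_y P x y * (M * (1 - hit_within k y)).
  rewrite hit_withinS // -[in LHS](P_sum1 x) -sumrB mulr_sumr.
  by apply: eq_bigr => y _; rewrite [RHS]mulrCA -{1}[P x y]mulr1 -mulrBr.
rewrite addnS hit_withinS // -[h x]h_harmonic // -sumrB.
by apply: ler_sum => y _; rewrite -mulrBr ler_wpM2l.
Qed.

Variables (N : nat) (d : R).
Hypothesis hit_lb : forall x, 0 < h x -> d <= hit_within N x.

Lemma sub_hit_within_le_expr j k x :
  h x - hit_within (j * N + k) x <= (1 - d) ^+ j.
Proof.
have d_le1 : d <= 1 by rewrite -(hit_within_top N) hit_lb ?h_top.
have expr_ge0 i : 0 <= (1 - d) ^+ i by rewrite exprn_ge0 ?subr_ge0.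
elim: j x => [|j IH] x.
  by rewrite expr0 (le_trans _ (h_le1 x)) // lerBlDr lerDl hit_within_ge0.
have [h_gt0 | h_le0] := ltP 0 (h x); last first.
  have -> : h x = 0 by apply/eqP; rewrite eq_le h_le0 h_ge0.
  by rewrite sub0r (le_trans _ (expr_ge0 _)) // oppr_le0 hit_within_ge0.
rewrite mulSnr addnAC.
apply: le_trans (sub_hit_within_addn N IH x) _.
by rewrite exprSr ler_wpM2l // lerB // hit_lb.
Qed.

Lemma sub_hit_within_le_expr_divn t x :
  h x - hit_within t x <= (1 - d) ^+ (t %/ N).
Proof. by rewrite {1}(divn_eq t N) sub_hit_within_le_expr. Qed.

End HitWithin.

Lemma cvg_geometric_blocks (R : archiRealFieldType) (f : nat -> R) (l q : R)
    (N : nat) :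
  (0 < N)%N -> `|q| < 1 -> (forall t, `|l - f t| <= q ^+ (t %/ N)) ->
  (f @ \oo --> l)%classic.
Proof.
move=> N_gt0 q_lt1 f_near; apply/cvgrPdist_le => eps eps_gt0.
have [J _ qJ] := (cvgrPdist_le _ _).1 (cvg_expr q_lt1) eps eps_gt0.
exists (J * N)%N => // t /= Jt.
apply: le_trans (f_near t) (le_trans (ler_norm _) _).
by rewrite -normrN -sub0r qJ //= leq_divRL.
Qed.

Section ConnectedGraph.
Variables (T : finType) (e : rel T).
Hypotheses (e_sym : symmetric e) (e_conn : forall x y : T, connect e x y).

Lemma boundary_edge (S : {set T}) (x : T) :
  x \in S -> S != [set: T] -> exists u v, [/\ u \in S, v \notin S & e u v].
Proof.
move=> xS S_neq_T.
pose leaving (p : T * T) := [&& p.1 \in S, p.2 \notin S & e p.1 p.2].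
have [[u v] /and3P[uS vS euv] | no_leaving] := pickP leaving.
  by exists u, v.
have S_closed : fingraph.closed e (mem S).
  apply: intro_closed; first exact: sym_connect_sym.
  move=> u v euv uS; apply/negPn/negP => vS.
  by have := no_leaving (u, v); rewrite /leaving /= uS vS euv.
case/negP: S_neq_T; apply/eqP/setP => y.
by rewrite inE -(closed_connect S_closed (e_conn x y)).
Qed.

Lemma nbrs_card_gt0 (u : T) : (1 < #|T|)%N -> (0 < #|nbrs e u|)%N.
Proof.
move=> T_gt1.
have u_neqT : [set u] != [set: T].
  by apply: contraTneq T_gt1 => uT; rewrite -cardsT -uT cards1.
have [_ [v [/set1P -> _ euv]]] := boundary_edge (set11 u) u_neqT.
by apply/card_gt0P; exists v; rewrite inE.
Qed.

End ConnectedGraph.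

Section NeighbourMean.
Variables (R : realFieldType) (T : finType) (e : rel T).

Definition nbr_weight (u : T) : R := ((#|T| * #|nbrs e u|)%N%:R)^-1.

Definition nbr_mean (k : T -> T -> R) : R :=
  \sum_u \sum_(v in nbrs e u) nbr_weight u * k u v.

Lemma nbr_weight_ge0 u : 0 <= nbr_weight u.
Proof. by rewrite invr_ge0 ler0n. Qed.

Lemma nbr_meanD k1 k2 :
  nbr_mean k1 + nbr_mean k2 = nbr_mean (fun u v => k1 u v + k2 u v).
Proof.
rewrite -big_split; apply: eq_bigr => u _.
by rewrite -big_split; apply: eq_bigr => v _; rewrite mulrDr.
Qed.

Lemma nbr_mean_mulr k c : nbr_mean k * c = nbr_mean (fun u v => k u v * c).
Proof.
rewrite mulr_suml; apply: eq_bigr => u _.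
by rewrite mulr_suml; apply: eq_bigr => v _; rewrite mulrA.
Qed.

Lemma nbr_mean_sum (I : finType) (k : I -> T -> T -> R) :
  \sum_i nbr_mean (k i) = nbr_mean (fun u v => \sum_i k i u v).
Proof.
rewrite exchange_big; apply: eq_bigr => u _.
by rewrite exchange_big; apply: eq_bigr => v _; rewrite mulr_sumr.
Qed.

Lemma nbr_mean_ge0 k : (forall u v, 0 <= k u v) -> 0 <= nbr_mean k.
Proof.
by move=> k_ge0; do 2!apply: sumr_ge0 => ? _; rewrite mulr_ge0 ?nbr_weight_ge0.
Qed.

Lemma nbr_mean_ge_term k u v : e u v -> (forall x y, 0 <= k x y) ->
  nbr_weight u * k u v <= nbr_mean k.
Proof.
move=> euv k_ge0.
have term_ge0 x y : 0 <= nbr_weight x * k x y.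
  by rewrite mulr_ge0 ?nbr_weight_ge0.
rewrite /nbr_mean (bigD1 u) //= (bigD1 v) ?inE //= -addrA lerDl.
by rewrite addr_ge0 ?sumr_ge0 // => x _; rewrite sumr_ge0.
Qed.

Hypotheses (T_gt0 : (0 < #|T|)%N) (nbrs_gt0 : forall u, (0 < #|nbrs e u|)%N).

Lemma nbr_mean_cst c : nbr_mean (fun _ _ => c) = c.
Proof.
have n_neq0 : #|T|%:R != 0 :> R by rewrite pnatr_eq0 -lt0n.
rewrite /nbr_mean (eq_bigr (fun _ => (#|T|%:R)^-1 * c)) => [|u _].
  by rewrite sumr_const -mulrnAl -[_ *+ #|_|]mulr_natr mulVf ?mul1r.
have deg_neq0 : #|nbrs e u|%:R != 0 :> R by rewrite pnatr_eq0 -lt0n.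
rewrite sumr_const -mulrnAl -[_ *+ #|_|]mulr_natr.
by rewrite /nbr_weight natrM invfM divfK.
Qed.

Lemma nbr_weight_ge u : ((#|T| * #|T|)%N%:R)^-1 <= nbr_weight u.
Proof.
rewrite lef_pV2 ?posrE ?ltr0n ?muln_gt0 ?T_gt0 ?nbrs_gt0 //.
by rewrite ler_nat leq_mul2l max_card orbT.
Qed.

End NeighbourMean.

Arguments nbr_weight {R T} e u.

Lemma sumr_indicator (R : pzSemiRingType) (I : finType) (i : I) (g : I -> R) :
  \sum_j (i == j)%:R * g j = g i.
Proof.
rewrite (bigD1 i) //= eqxx mul1r big1 ?addr0 // => j j_neq_i.
by rewrite eq_sym (negbTE j_neq_i) mul0r.
Qed.

Section NeutralMoran.
Variables (R : realType) (T : finType) (e : rel T).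
Local Notation P := (mixed_step e (2^-1 : R) 1).

Lemma fit1 (S : {set T}) (u : T) : fit (1 : R) S u = 1.
Proof. by rewrite /fit; case: ifP. Qed.

Lemma bd_step1E S S' :
  bd_step e (1 : R) S S' = nbr_mean e (fun u v => (copy_type S u v == S')%:R).
Proof.
apply: eq_bigr => u _; apply: eq_bigr => v _.
rewrite fit1 (eq_bigr (fun _ => 1)) => [|w _]; last exact: fit1.
by rewrite sumr_const div1r /nbr_weight natrM invfM.
Qed.

Lemma db_step1E S S' :
  db_step e (1 : R) S S' = nbr_mean e (fun v u => (copy_type S u v == S')%:R).
Proof.
apply: eq_bigr => v _; apply: eq_bigr => u _.
rewrite fit1 (eq_bigr (fun _ => 1)) => [|w _]; last exact: fit1.
by rewrite sumr_const div1r /nbr_weight natrM invfM.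
Qed.

Lemma neutral_stepE S S' : P S S' = 2^-1 * nbr_mean e (fun u v =>
  (copy_type S u v == S')%:R + (copy_type S v u == S')%:R).
Proof.
have half_half : 1 - 2^-1 = 2^-1 :> R by rewrite {1}(splitr 1) div1r addrK.
by rewrite /mixed_step half_half -mulrDr bd_step1E db_step1E nbr_meanD.
Qed.

Lemma neutral_step_mean S (g : {set T} -> R) : \sum_S' P S S' * g S' =
  2^-1 * nbr_mean e (fun u v => g (copy_type S u v) + g (copy_type S v u)).
Proof.
under eq_bigr do rewrite neutral_stepE -mulrA nbr_mean_mulr.
rewrite -mulr_sumr nbr_mean_sum; congr (_ * nbr_mean _ _).
apply/funext => u; apply/funext => v.
by under eq_bigr do rewrite mulrDl; rewrite big_split /= !sumr_indicator.
Qed.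

Lemma neutral_step_ge0 S S' : 0 <= P S S'.
Proof.
rewrite neutral_stepE mulr_ge0 ?invr_ge0 ?ler0n ?nbr_mean_ge0 // => u v.
by rewrite addr_ge0.
Qed.

Lemma neutral_step_ge (S : {set T}) u v : u \in S -> v \notin S -> e u v ->
  2^-1 * nbr_weight e u <= P S (v |: S).
Proof.
move=> uS vS euv; rewrite neutral_stepE ler_wpM2l ?invr_ge0 ?ler0n //.
apply: le_trans (nbr_mean_ge_term euv _); last by move=> x y; rewrite addr_ge0.
by rewrite {1}/copy_type uS /= eqxx ler_peMr ?nbr_weight_ge0 // lerDl.
Qed.

Lemma card_copy_type (S : {set T}) u v :
  (#|copy_type S u v| + (v \in S) = #|S| + (u \in S))%N.
Proof.
rewrite /copy_type; case: (u \in S); last rewrite [in RHS](cardsD1 v S).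
  by rewrite cardsU1; case: (v \in S) => /=; lia.
by case: (v \in S) => /=; lia.
Qed.

Hypotheses (T_gt0 : (0 < #|T|)%N) (nbrs_gt0 : forall u, (0 < #|nbrs e u|)%N).

Lemma neutral_step_sum1 S : \sum_S' P S S' = 1.
Proof.
under eq_bigr do rewrite -[P _ _]mulr1.
by rewrite neutral_step_mean nbr_mean_cst // mulVf ?pnatr_eq0.
Qed.

Lemma neutral_step_card S : \sum_S' P S S' * #|S'|%:R = #|S|%:R.
Proof.
have card_copy_type2 u v :
    #|copy_type S u v|%:R + #|copy_type S v u|%:R = (#|S| * 2)%:R :> R.
  rewrite -natrD; congr _%:R.
  by have := card_copy_type S u v; have := card_copy_type S v u; lia.
transitivity (2^-1 * nbr_mean e (fun _ _ => (#|S| * 2)%:R : R)).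
  rewrite neutral_step_mean; congr (_ * nbr_mean _ _).
  by apply/funext => u; apply/funext => v; apply: card_copy_type2.
by rewrite nbr_mean_cst // natrM mulrCA mulVf ?mulr1 ?pnatr_eq0.
Qed.

End NeutralMoran.

Lemma reach_withinE (R : realType) (T : finType) (e : rel T) (lam r : R) t S :
  reach_within e lam r t S = hit_within (mixed_step e lam r) [set: T] t S.
Proof. by elim: t S => [|t IH] S //=; under eq_bigr do rewrite IH. Qed.

Section NeutralFixation.
Variables (R : realType) (T : finType) (e : rel T).
Hypotheses (e_sym : symmetric e) (e_conn : forall x y : T, connect e x y)
  (n_ge2 : (1 < #|T|)%N).
Local Notation P := (mixed_step e (2^-1 : R) 1).

Let T_gt0 : (0 < #|T|)%N. Proof. exact: ltnW n_ge2. Qed.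
Let nbrs_gt0 u : (0 < #|nbrs e u|)%N. Proof. exact: nbrs_card_gt0. Qed.
Let h (S : {set T}) : R := #|S|%:R / #|T|%:R.
Let c : R := 2^-1 * ((#|T| * #|T|)%N%:R)^-1.

Let c_gt0 : 0 < c.
Proof. by rewrite mulr_gt0 ?invr_gt0 ?ltr0n ?muln_gt0 ?T_gt0. Qed.

Let c_le1 : c <= 1.
Proof.
have inv_le1 m : (0 < m)%N -> (m%:R : R)^-1 <= 1.
  by move=> m_gt0; rewrite invf_le1 ?ltr0n // ler1n.
by rewrite mulr_ile1 ?invr_ge0 ?ler0n ?inv_le1 ?muln_gt0 ?T_gt0.
Qed.

Lemma fixation_within_ge k (S : {set T}) : (0 < #|S|)%N -> (#|~: S| <= k)%N ->
  c ^+ k <= hit_within P [set: T] k S.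
Proof.
move=> S_gt0 S_le_k.
apply: (hit_within_ge_expr (@neutral_step_ge0 R T e)
  (A := [pred S : {set T} | 0 < #|S|]%N) (phi := fun S => #|~: S|)) => //.
  by rewrite (ltW c_gt0) c_le1.
move=> {S_gt0 S_le_k}S /card_gt0P[x xS] S_neqT.
have [u [v [uS vS euv]]] := boundary_edge e_sym e_conn xS S_neqT.
exists (v |: S).
  apply/andP; split; first by apply/card_gt0P; exists v; rewrite setU11.
  apply: proper_card.
  by rewrite properC properEcard subsetU1 cardsU1 vS add1n ltnSn.
apply: le_trans (neutral_step_ge R uS vS euv).
by rewrite ler_wpM2l ?invr_ge0 ?ler0n ?nbr_weight_ge.
Qed.

Lemma neutral_reach_within_geometric : exists2 q : R, `|q| < 1 &
  forall t (S : {set T}),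
    `|#|S|%:R / #|T|%:R - reach_within e 2^-1 1 t S| <= q ^+ (t %/ #|T|).
Proof.
have P_ge0 := @neutral_step_ge0 R T e.
have h_top : h [set: T] = 1 by rewrite /h cardsT divff // pnatr_eq0 -lt0n.
have h_ge0 S : 0 <= h S by rewrite divr_ge0 ?ler0n.
have h_le1 S : h S <= 1 by rewrite ler_pdivrMr ?ltr0n // mul1r ler_nat max_card.
have h_harmonic S : S != [set: T] -> \sum_S' P S S' * h S' = h S.
  move=> _; under eq_bigr do rewrite mulrA.
  by rewrite -mulr_suml neutral_step_card.
exists (1 - c ^+ #|T|).
  by rewrite ger0_norm ?subr_ge0 ?exprn_ile1 ?(ltW c_gt0) // gtrBl exprn_gt0.
move=> t S; rewrite reach_withinE ger0_norm ?subr_ge0; last first.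
  exact: (hit_within_le P_ge0 h_top h_ge0 h_harmonic).
apply: (sub_hit_within_le_expr_divn P_ge0 (neutral_step_sum1 R T_gt0 nbrs_gt0)
  h_top h_ge0 h_le1 h_harmonic) => S' hS'_gt0.
apply: fixation_within_ge; last exact: max_card.
by rewrite lt0n; apply: contraTneq hS'_gt0 => S'_0; rewrite /h S'_0 mul0r ltxx.
Qed.

End NeutralFixation.

Local Open Scope classical_set_scope.
Local Open Scope ring_scope.

Theorem mainTheorem4 (R : realType) (T : finType) (e : rel T)
  (e_sym : symmetric e) (e_irr : irreflexive e)
  (e_conn : forall x y : T, connect e x y) (n_ge2 : (1 < #|T|)%N)
  (S0 : {set T}) :
  (fun t : nat => reach_within e (2^-1 : R) 1 t S0) @ \oo -->
    (#|S0|%:R / #|T|%:R : R).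
Proof.
have [q q_lt1 err] := neutral_reach_within_geometric R e_sym e_conn n_ge2.
exact: cvg_geometric_blocks (ltnW n_ge2) q_lt1 (fun t => err t S0).
Qed.
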